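(* Let $n=2$ and let $I_1,I_2$ be independent Bernoulli random variables with $\Pr[I_i=1]=p_i\in(0,1)$, $q_i=1-p_i$, and set $I_3=(1-I_1)(1-I_2)$. For positive reals $\pi_1,\pi_2,\pi_3>0$ consider the Tavin scheme with active administrator, with compensations $$W_i=(\pi_1+\pi_2+\pi_3)\,\frac{\pi_iI_i}{\pi_1I_1+\pi_2I_2+\pi_3I_3},\qquad i=1,2,3.$$ Then $E[W_i]=\pi_i$ for $i=1,2,3$ if and only if $$\pi_1=\pi_3\,\frac{p_1}{q_1}\,\frac{1-q_1q_2}{p_1q_2+p_2q_1},\qquad \pi_2=\pi_3\,\frac{p_2}{q_2}\,\frac{1-q_1q_2}{p_1q_2+p_2q_1}.$$ In particular, the set of positive investment vectors making this scheme actuarially fair for all three agents is exactly the set of vectors of this form with $\pi_3>0$ arbitrary.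
   Context: Note that $\pi_1I_1+\pi_2I_2+\pi_3I_3>0$ always, since $I_3=1$ exactly when $I_1=I_2=0$. *)

From mathcomp Require Import all_boot all_order all_algebra.
Set Implicit Arguments. Unset Strict Implicit. Unset Printing Implicit Defensive.
Import Order.TTheory GRing.Theory Num.Theory.
Local Open Scope ring_scope.

(* Sample space: outcomes (I_1, I_2) in {0,1}^2, encoded as bool * bool. *)
Definition Omega := (bool * bool)%type.

Definition ind (R : ringType) (b : bool) : R := if b then 1 else 0.

Definition bern2 (R : ringType) (p1 p2 : R) (w : Omega) : R :=
  (if w.1 then p1 else 1 - p1) * (if w.2 then p2 else 1 - p2).

Definition I1 (R : ringType) (w : Omega) : R := ind R w.1.
Definition I2 (R : ringType) (w : Omega) : R := ind R w.2.
Definition I3 (R : ringType) (w : Omega) : R := (1 - I1 R w) * (1 - I2 R w).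

Definition Ebern (R : ringType) (p1 p2 : R) (X : Omega -> R) : R :=
  \sum_(w : Omega) bern2 p1 p2 w * X w.

Definition denom (R : fieldType) (pi1 pi2 pi3 : R) (w : Omega) : R :=
  pi1 * I1 R w + pi2 * I2 R w + pi3 * I3 R w.

Definition W1 (R : fieldType) (pi1 pi2 pi3 : R) (w : Omega) : R :=
  (pi1 + pi2 + pi3) * (pi1 * I1 R w / denom pi1 pi2 pi3 w).
Definition W2 (R : fieldType) (pi1 pi2 pi3 : R) (w : Omega) : R :=
  (pi1 + pi2 + pi3) * (pi2 * I2 R w / denom pi1 pi2 pi3 w).
Definition W3 (R : fieldType) (pi1 pi2 pi3 : R) (w : Omega) : R :=
  (pi1 + pi2 + pi3) * (pi3 * I3 R w / denom pi1 pi2 pi3 w).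

Definition fair (R : fieldType) (p1 p2 pi1 pi2 pi3 : R) : Prop :=
  [/\ Ebern p1 p2 (W1 pi1 pi2 pi3) = pi1,
      Ebern p1 p2 (W2 pi1 pi2 pi3) = pi2 &
      Ebern p1 p2 (W3 pi1 pi2 pi3) = pi3].

(* Agent 3 is paid only on the event {I1 = I2 = 0}, where it receives the whole
   pot S = pi1 + pi2 + pi3, so E[W3] = S q1 q2 and fairness for agent 3 amounts
   to pi1 + pi2 = S (1 - q1 q2).  Given this, E[W1] is affine in pi1 and the
   fairness equation of agent 1 has exactly one solution; agent 2 is agent 1
   with the two Bernoulli variables swapped. *)

From mathcomp Require Import all_boot all_order all_algebra ring lra.
Import Order.TTheory GRing.Theory Num.Theory.
Set Implicit Arguments. Unset Strict Implicit. Unset Printing Implicit Defensive.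
Local Open Scope ring_scope.

Section Expectations.
Variables (R : fieldType) (p1 p2 : R).

Lemma EbernE (X : Omega -> R) : Ebern p1 p2 X =
  p1 * p2 * X (true, true) + p1 * (1 - p2) * X (true, false)
  + (1 - p1) * p2 * X (false, true) + (1 - p1) * (1 - p2) * X (false, false).
Proof.
rewrite /Ebern (eq_bigr (fun w : Omega => bern2 p1 p2 (w.1, w.2) * X (w.1, w.2)));
  last by case.
rewrite -(pair_bigA _ (fun a b => bern2 p1 p2 (a, b) * X (a, b))) /=.
by rewrite !big_bool /= /bern2 /=; ring.
Qed.

Lemma Ebern_W1 (pi1 pi2 pi3 : R) : pi1 != 0 ->
  Ebern p1 p2 (W1 pi1 pi2 pi3) =
  (pi1 + pi2 + pi3) * (p1 * p2 * (pi1 / (pi1 + pi2)) + p1 * (1 - p2)).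
Proof.
move=> pi1_neq0; rewrite EbernE /W1 /denom /I1 /I2 /I3 /ind /=.
by rewrite !(mulr0, mulr1, subrr, addr0, add0r, subr0, mul0r, divff pi1_neq0); ring.
Qed.

Lemma Ebern_W3 (pi1 pi2 pi3 : R) : pi3 != 0 ->
  Ebern p1 p2 (W3 pi1 pi2 pi3) = (pi1 + pi2 + pi3) * ((1 - p1) * (1 - p2)).
Proof.
move=> pi3_neq0; rewrite EbernE /W3 /denom /I1 /I2 /I3 /ind /=.
by rewrite !(mulr0, mulr1, subrr, addr0, add0r, subr0, mul0r, divff pi3_neq0); ring.
Qed.

End Expectations.

Lemma Ebern_swap (R : fieldType) (p1 p2 : R) (X : Omega -> R) :
  Ebern p1 p2 X = Ebern p2 p1 (fun w => X (w.2, w.1)).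
Proof. by rewrite !EbernE /=; ring. Qed.

Lemma W2_swap (R : fieldType) (pi1 pi2 pi3 : R) (w : Omega) :
  W2 pi1 pi2 pi3 w = W1 pi2 pi1 pi3 (w.2, w.1).
Proof.
rewrite /W2 /W1 [pi2 + pi1]addrC; congr (_ * (_ / _)).
by rewrite /denom /I3 /I1 /I2 /=; ring.
Qed.

Lemma Ebern_W2_swap (R : fieldType) (p1 p2 pi1 pi2 pi3 : R) :
  Ebern p1 p2 (W2 pi1 pi2 pi3) = Ebern p2 p1 (W1 pi2 pi1 pi3).
Proof. by rewrite [RHS]Ebern_swap; apply: eq_bigr => w _; rewrite W2_swap. Qed.

Definition fair_ratio (R : fieldType) (p1 p2 : R) : R :=
  (1 - (1 - p1) * (1 - p2)) / (p1 * (1 - p2) + p2 * (1 - p1)).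

Lemma fair_ratioC (R : fieldType) (p1 p2 : R) : fair_ratio p1 p2 = fair_ratio p2 p1.
Proof. by rewrite /fair_ratio [(1 - p2) * _]mulrC [p2 * _ + _]addrC. Qed.

Lemma eq_iff_subr_scaled (R : idomainType) (x y t c : R) :
  c != 0 -> x - y = c * (t - y) -> (x = y <-> y = t).
Proof.
move=> c_neq0 exy; have := mulf_eq0 c (t - y).
rewrite -exy (negbTE c_neq0) !subr_eq0 /= => eq_xy_ty.
split=> [/eqP | ty]; first by rewrite eq_xy_ty => /eqP.
by apply/eqP; rewrite eq_xy_ty ty.
Qed.

Section Fairness.
Variables (R : realFieldType) (p1 p2 : R).
Hypotheses (hp1 : 0 < p1 < 1) (hp2 : 0 < p2 < 1).

Lemma bern2_params_gt0 :
  [/\ 0 < 1 - p1, 0 < 1 - p2, 0 < p1 * (1 - p2) + p2 * (1 - p1)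
    & 0 < 1 - (1 - p1) * (1 - p2)].
Proof. by case/andP: hp1 => ? ?; case/andP: hp2 => ? ?; split; nra. Qed.

Lemma fair_ratio_gt0 : 0 < fair_ratio p1 p2.
Proof. by have [_ _ D_gt0 K_gt0] := bern2_params_gt0; rewrite divr_gt0. Qed.

Lemma fair_shares_balance (pi1 pi2 pi3 : R) :
  pi1 = pi3 * (p1 / (1 - p1)) * fair_ratio p1 p2 ->
  pi2 = pi3 * (p2 / (1 - p2)) * fair_ratio p1 p2 ->
  pi3 = (pi1 + pi2 + pi3) * ((1 - p1) * (1 - p2)).
Proof.
have [q1_gt0 q2_gt0 D_gt0 _] := bern2_params_gt0.
by move=> -> ->; rewrite /fair_ratio; field; rewrite !gt_eqF.
Qed.

Lemma Ebern_W1_eq_iff (pi1 pi2 pi3 : R) : 0 < pi1 -> 0 < pi2 -> 0 < pi3 ->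
  pi3 = (pi1 + pi2 + pi3) * ((1 - p1) * (1 - p2)) ->
  Ebern p1 p2 (W1 pi1 pi2 pi3) = pi1 <->
  pi1 = pi3 * (p1 / (1 - p1)) * fair_ratio p1 p2.
Proof.
move=> pi1_gt0 pi2_gt0 pi3_gt0 balance.
have [q1_gt0 q2_gt0 D_gt0 K_gt0] := bern2_params_gt0.
rewrite Ebern_W1 ?gt_eqF //.
set S := pi1 + pi2 + pi3 in balance *.
have S_gt0 : 0 < S by rewrite /S; lra.
have sumE : pi1 + pi2 = S * (1 - (1 - p1) * (1 - p2)).
  by rewrite mulrBr mulr1 -balance /S; ring.
rewrite sumE; clearbody S; rewrite balance.
(* with K = 1 - (1 - p1) (1 - p2) and D = p1 (1 - p2) + p2 (1 - p1), the
   scale is D / K and the identity rests on K - p1 p2 = D *)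
apply: (@eq_iff_subr_scaled _ _ _ _
  ((p1 * (1 - p2) + p2 * (1 - p1)) / (1 - (1 - p1) * (1 - p2)))).
  by rewrite mulf_neq0 ?invr_eq0 ?gt_eqF.
by rewrite /fair_ratio; field; rewrite !gt_eqF.
Qed.

End Fairness.

Lemma Ebern_W2_eq_iff (R : realFieldType) (p1 p2 pi1 pi2 pi3 : R) :
  0 < p1 < 1 -> 0 < p2 < 1 -> 0 < pi1 -> 0 < pi2 -> 0 < pi3 ->
  pi3 = (pi1 + pi2 + pi3) * ((1 - p1) * (1 - p2)) ->
  Ebern p1 p2 (W2 pi1 pi2 pi3) = pi2 <->
  pi2 = pi3 * (p2 / (1 - p2)) * fair_ratio p1 p2.
Proof.
move=> hp1 hp2 pi1_gt0 pi2_gt0 pi3_gt0 balance.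
rewrite Ebern_W2_swap fair_ratioC; apply: Ebern_W1_eq_iff => //.
by rewrite [pi2 + pi1]addrC [(1 - p2) * _]mulrC.
Qed.

Lemma fair_iff (R : realFieldType) (p1 p2 pi1 pi2 pi3 : R) :
  0 < p1 < 1 -> 0 < p2 < 1 -> 0 < pi1 -> 0 < pi2 -> 0 < pi3 ->
  fair p1 p2 pi1 pi2 pi3 <->
  pi1 = pi3 * (p1 / (1 - p1)) * fair_ratio p1 p2 /\
  pi2 = pi3 * (p2 / (1 - p2)) * fair_ratio p1 p2.
Proof.
move=> hp1 hp2 pi1_gt0 pi2_gt0 pi3_gt0; rewrite /fair Ebern_W3 ?gt_eqF //.
have W1E := Ebern_W1_eq_iff hp1 hp2 pi1_gt0 pi2_gt0 pi3_gt0.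
have W2E := Ebern_W2_eq_iff hp1 hp2 pi1_gt0 pi2_gt0 pi3_gt0.
split=> [[fair1 fair2 /esym balance] | [share1 share2]].
  by rewrite -(W1E balance) -(W2E balance).
have balance := fair_shares_balance hp1 hp2 share1 share2.
by split; [apply/(W1E balance) | apply/(W2E balance) | rewrite -balance].
Qed.

Theorem mainTheorem9 (R : realFieldType) (p1 p2 : R)
  (hp1 : 0 < p1 < 1) (hp2 : 0 < p2 < 1) :
  let q1 := 1 - p1 in let q2 := 1 - p2 in
  (forall pi1 pi2 pi3 : R, 0 < pi1 -> 0 < pi2 -> 0 < pi3 ->
     (fair p1 p2 pi1 pi2 pi3 <->
      (pi1 = pi3 * (p1 / q1) * ((1 - q1 * q2) / (p1 * q2 + p2 * q1)) /\
       pi2 = pi3 * (p2 / q2) * ((1 - q1 * q2) / (p1 * q2 + p2 * q1)))))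
  /\
  (forall pi1 pi2 pi3 : R,
     ([/\ 0 < pi1, 0 < pi2, 0 < pi3 & fair p1 p2 pi1 pi2 pi3] <->
      [/\ 0 < pi3,
          pi1 = pi3 * (p1 / q1) * ((1 - q1 * q2) / (p1 * q2 + p2 * q1)) &
          pi2 = pi3 * (p2 / q2) * ((1 - q1 * q2) / (p1 * q2 + p2 * q1))])).
Proof.
move=> q1 q2; split=> [pi1 pi2 pi3 | pi1 pi2 pi3]; first exact: fair_iff.
split=> [[pi1_gt0 pi2_gt0 pi3_gt0] | [pi3_gt0 share1 share2]].
  by move/(fair_iff hp1 hp2 pi1_gt0 pi2_gt0 pi3_gt0) => [share1 share2].
have [q1_gt0 q2_gt0 _ _] := bern2_params_gt0 hp1 hp2.
have ratio_gt0 := fair_ratio_gt0 hp1 hp2.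
have /andP[p1_gt0 _] := hp1; have /andP[p2_gt0 _] := hp2.
have pi1_gt0 : 0 < pi1.
  by rewrite share1; apply: (mulr_gt0 _ ratio_gt0); rewrite mulr_gt0 ?divr_gt0.
have pi2_gt0 : 0 < pi2.
  by rewrite share2; apply: (mulr_gt0 _ ratio_gt0); rewrite mulr_gt0 ?divr_gt0.
by split=> //; apply/(fair_iff hp1 hp2 pi1_gt0 pi2_gt0 pi3_gt0).
Qed.
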